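(* Let $R$ be a connected zero-sum-free semiring and $V$ a free $R$-module. The set of basis lines of $V$ does not depend on the choice of basis. Moreover, any $R$-module automorphism $f:V\to V$ induces a permutation $\sigma_f$ of the set of basis lines, sending the line spanned by a basis vector $v$ to $\mathrm{span}(f(v))$; and for two automorphisms $f,g$ one has $\sigma_{fg}=\sigma_f\sigma_g$.
   Context: All semirings are commutative. $R$ is zero-sum-free if $a+b=0$ implies $a=b=0$, and connected if $\mathrm{Spec}\,R$ is connected, equivalently $R$ has only trivial idempotents. Given a basis of $V$, a basis line is a submodule spanned by a single basis vector. *)

From HB Require Import structures.
From mathcomp Require Import all_boot all_order all_algebra.
Set Implicit Arguments. Unset Strict Implicit. Unset Printing Implicit Defensive.
Import GRing.Theory.
Local Open Scope ring_scope.

Definition zero_sum_free (R : comNzSemiRingType) : Prop :=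
  forall a b : R, a + b = 0 -> a = 0 /\ b = 0.

Definition connected_semiring (R : comNzSemiRingType) : Prop :=
  forall e : R, e * e = e -> e = 0 \/ e = 1.

Section Defs.
Variables (R : comNzSemiRingType) (V : lSemiModType R).

Definition spans (B : V -> Prop) : Prop :=
  forall v : V, exists (s : seq V) (c : V -> R),
    (forall u, u \in s -> B u) /\ v = \sum_(u <- s) c u *: u.

Definition lin_indep (B : V -> Prop) : Prop :=
  forall (s : seq V) (c d : V -> R), uniq s -> (forall u, u \in s -> B u) ->
    \sum_(u <- s) c u *: u = \sum_(u <- s) d u *: u ->
    forall u, u \in s -> c u = d u.

Definition is_basis (B : V -> Prop) : Prop := spans B /\ lin_indep B.

Definition free_module : Prop := exists B, is_basis B.

Definition same_set (L1 L2 : V -> Prop) : Prop := forall x, L1 x <-> L2 x.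

Definition line (v : V) : V -> Prop := fun w => exists r : R, w = r *: v.

Definition basis_line (B : V -> Prop) (L : V -> Prop) : Prop :=
  exists v, B v /\ same_set L (line v).

Definition is_automorphism (f : V -> V) : Prop :=
  [/\ forall x y, f (x + y) = f x + f y,
      forall (a : R) x, f (a *: x) = a *: f x & bijective f].

Definition sigma (f : V -> V) (L : V -> Prop) : V -> Prop :=
  fun w => exists u, L u /\ w = f u.

End Defs.

From mathcomp Require Import all_boot all_order all_algebra.
From Stdlib Require Import ClassicalEpsilon.
Set Implicit Arguments. Unset Strict Implicit. Unset Printing Implicit Defensive.
Import GRing.Theory.
Local Open Scope ring_scope.

(* Let b be a vector of a basis B1 and B2 another basis. Expanding b along B2
   and each e in B2 back along B1, zero-sum-freeness kills every cross term,
   so the elements p_e q_e (p_e the B2-coordinate of b, q_e the b-coordinate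
   of e) are orthogonal idempotents summing to 1.  Connectedness makes one of
   them equal to 1, so p_e is a unit and b = p_e e: b and e span the same
   line.  An automorphism maps a basis to a basis, hence basis lines to basis
   lines, and the rest is bookkeeping about images of sets. *)

Lemma zero_sum_free_sum_eq0 (R : comNzSemiRingType) (I : eqType) (s : seq I)
    (F : I -> R) :
  zero_sum_free R -> \sum_(i <- s) F i = 0 -> forall i, i \in s -> F i = 0.
Proof.
move=> zsf; elim: s => [|j s IH] //; rewrite big_cons => /zsf [Fj0 /IH Fs0] i.
by rewrite in_cons => /orP [/eqP ->|/Fs0].
Qed.

Lemma connected_idempotent_decomposition (R : comNzSemiRingType) (I : eqType)
    (s : seq I) (eps : I -> R) :
  connected_semiring R -> uniq s -> \sum_(i <- s) eps i = 1 ->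
  {in s &, forall i j, i != j -> eps i * eps j = 0} ->
  exists2 i, i \in s & eps i = 1.
Proof.
move=> conn us sum1 orth.
have idem i : i \in s -> eps i * eps i = eps i.
  move=> si; rewrite -{3}(mulr1 (eps i)) -sum1 mulr_sumr (bigD1_seq i) //=.
  by rewrite big1_seq ?addr0 // => j /andP [ji sj]; rewrite orth // eq_sym.
have [/hasP [i si /eqP]|/hasPn no1] := boolP (has (fun i => eps i == 1) s).
  by exists i.
exfalso; move/eqP: sum1; rewrite big1_seq ?(eq_sym 0) ?oner_eq0 // => i /andP [_ si].
by case: (conn _ (idem i si)) => // eps1; move: (no1 i si); rewrite eps1 eqxx.
Qed.

Section Representations.
Variables (R : comNzSemiRingType) (V : lSemiModType R).
Implicit Types (B : V -> Prop) (s : seq V) (c : V -> R) (u v : V).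

Definition coef_on s c u : R := if u \in s then c u else 0.

Definition represents B v s c : Prop :=
  [/\ uniq s, forall u, u \in s -> B u & v = \sum_(u <- s) c u *: u].

Lemma coef_on_sub s s' c : {subset s <= s'} ->
  coef_on s' (coef_on s c) =1 coef_on s c.
Proof.
move=> ss' u; rewrite /coef_on; case: ifP => // /negbT s'u.
by case: ifP => // /ss'; rewrite (negbTE s'u).
Qed.

Lemma represents_sub B v s c s' : represents B v s c -> uniq s' ->
  {subset s <= s'} -> (forall u, u \in s' -> B u) ->
  represents B v s' (coef_on s c).
Proof.
move=> [us _ ->] us' ss' Bs'; split => //.
rewrite [RHS](eq_bigr (fun u => if u \in s then c u *: u else 0)); last first.
  by move=> u _; rewrite /coef_on; case: ifP => // _; rewrite scale0r.
rewrite -big_mkcond -big_filter; apply: perm_big.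
apply: uniq_perm => //; first exact: filter_uniq.
by move=> u; rewrite mem_filter; case: (boolP (u \in s)) => // /ss' ->.
Qed.

Lemma represents_pool B v1 s1 c1 v2 s2 c2 :
  represents B v1 s1 c1 -> represents B v2 s2 c2 ->
  exists s, [/\ {subset s1 <= s}, {subset s2 <= s},
    represents B v1 s (coef_on s1 c1) & represents B v2 s (coef_on s2 c2)].
Proof.
move=> r1 r2; exists (undup (s1 ++ s2)).
have ss1 : {subset s1 <= undup (s1 ++ s2)}.
  by move=> u su; rewrite mem_undup mem_cat su.
have ss2 : {subset s2 <= undup (s1 ++ s2)}.
  by move=> u su; rewrite mem_undup mem_cat su orbT.
have Bs : forall u, u \in undup (s1 ++ s2) -> B u.
  by case: r1 r2 => _ B1 _ [_ B2 _] u; rewrite mem_undup mem_cat => /orP [/B1|/B2].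
by split => //; apply: represents_sub (undup_uniq _) _ _.
Qed.

Lemma represents_unique B v s1 c1 s2 c2 : lin_indep B ->
  represents B v s1 c1 -> represents B v s2 c2 -> coef_on s1 c1 =1 coef_on s2 c2.
Proof.
move=> li r1 r2 u.
have [s [ss1 ss2 [us Bs e1] [_ _ e2]]] := represents_pool r1 r2.
rewrite -(coef_on_sub c1 ss1) -(coef_on_sub c2 ss2).
have [su|/negbTE su] := boolP (u \in s); last by rewrite /coef_on su.
rewrite /(coef_on s) su.
by apply: (li _ (coef_on s1 c1) (coef_on s2 c2) us Bs); rewrite // -e1 -e2.
Qed.

Lemma represents_exists B : spans B -> forall v, exists s c, represents B v s c.
Proof.
move=> sp v; have [s [c [Bs ->]]] := sp v.
elim: s Bs => [|x s IH] Bs; first by exists [::], c; rewrite /represents !big_nil.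
have [s' [c' [us' Bs' es']]] : exists s' c', represents B (\sum_(u <- s) c u *: u) s' c'.
  by apply: IH => u us; apply: Bs; rewrite in_cons us orbT.
rewrite big_cons es'; have [xs'|xNs'] := boolP (x \in s').
  exists s', (fun u => if u == x then c x + c' x else c' u); split => //.
  rewrite [in RHS](bigD1_seq x) //= (bigD1_seq x) //= eqxx scalerDl addrA.
  by congr (_ + _); apply: eq_bigr => u /negbTE ->.
exists (x :: s'), (fun u => if u == x then c x else c' u); split.
- by rewrite /= xNs'.
- move=> u; rewrite in_cons => /orP [/eqP ->|/Bs'] //.
  by apply: Bs; rewrite in_cons eqxx.
- rewrite big_cons eqxx; congr (_ + _); apply: eq_big_seq => u s'u.
  by case: eqP => // eux; rewrite -eux s'u in xNs'.
Qed.

(* Meaningful only when B is a basis. *)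
Definition bcoord B v u : R :=
  epsilon (inhabits 0) (fun r => exists s c, represents B v s c /\ r = coef_on s c u).

Section BasisCoordinates.
Variables (B : V -> Prop) (basisB : is_basis B).

Lemma bcoord_represents v s c u : represents B v s c -> bcoord B v u = coef_on s c u.
Proof.
move=> r; have [_ li] := basisB.
have ex : exists r, exists s c, represents B v s c /\ r = coef_on s c u.
  by exists (coef_on s c u), s, c.
rewrite /bcoord; have [s' [c' [r' ->]]] := epsilon_spec (inhabits 0) _ ex.
exact: represents_unique li r' r u.
Qed.

Lemma bcoordD x y u : bcoord B (x + y) u = bcoord B x u + bcoord B y u.
Proof.
have [sp _] := basisB.
have [s1 [c1 r1]] := represents_exists sp x.
have [s2 [c2 r2]] := represents_exists sp y.
have [s [_ _ rx ry]] := represents_pool r1 r2.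
have rxy : represents B (x + y) s (fun z => coef_on s1 c1 z + coef_on s2 c2 z).
  case: rx ry => us Bs ex [_ _ ey]; split => //.
  by rewrite ex ey -big_split; apply: eq_bigr => z _; rewrite scalerDl.
rewrite (bcoord_represents u rxy) (bcoord_represents u rx) (bcoord_represents u ry).
by rewrite /coef_on; case: ifP; rewrite ?addr0.
Qed.

Lemma bcoordZ a x u : bcoord B (a *: x) u = a * bcoord B x u.
Proof.
have [sp _] := basisB; have [s [c rx]] := represents_exists sp x.
have rax : represents B (a *: x) s (fun z => a * c z).
  case: rx => us Bs ->; split => //.
  by rewrite scaler_sumr; apply: eq_bigr => z _; rewrite scalerA.
rewrite (bcoord_represents u rax) (bcoord_represents u rx) /coef_on.
by case: ifP; rewrite ?mulr0.
Qed.

Lemma bcoord0 u : bcoord B 0 u = 0.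
Proof. by rewrite -(scale0r 0) bcoordZ mul0r. Qed.

Lemma bcoord_sum (I : Type) (r : seq I) (a : I -> R) (w : I -> V) u :
  bcoord B (\sum_(i <- r) a i *: w i) u = \sum_(i <- r) a i * bcoord B (w i) u.
Proof.
elim: r => [|i r IH]; first by rewrite !big_nil bcoord0.
by rewrite !big_cons bcoordD bcoordZ IH.
Qed.

Lemma bcoord_basis b u : B b -> bcoord B b u = if u == b then 1 else 0.
Proof.
move=> Bb; have rb : represents B b [:: b] (fun _ => 1).
  split=> //; first by move=> z; rewrite mem_seq1 => /eqP ->.
  by rewrite big_seq1 scale1r.
by rewrite (bcoord_represents u rb) /coef_on mem_seq1.
Qed.

Lemma bcoord_expansion v : exists s, [/\ uniq s, forall u, u \in s -> B u,
  v = \sum_(u <- s) bcoord B v u *: u & forall u, u \notin s -> bcoord B v u = 0].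
Proof.
have [sp _] := basisB; have [s [c r]] := represents_exists sp v.
have cr u : bcoord B v u = coef_on s c u := bcoord_represents u r.
case: r => us Bs ev; exists s; split => //; last first.
  by move=> u /negbTE su; rewrite cr /coef_on su.
by rewrite {1}ev; apply: eq_big_seq => u su; rewrite cr /coef_on su.
Qed.

End BasisCoordinates.
End Representations.

Section BasisLines.
Variables (R : comNzSemiRingType) (V : lSemiModType R).
Hypotheses (zsfR : zero_sum_free R) (connR : connected_semiring R).
Implicit Types (B : V -> Prop) (L : V -> Prop).

(* The B2-coordinate of e at e' is 0; expanding e along B1 writes it as a
   sum of the products below, which therefore all vanish. *)
Lemma bcoord_cross_eq0 B1 B2 e e' x : is_basis B1 -> is_basis B2 ->
  B2 e -> e != e' -> bcoord B1 e x * bcoord B2 x e' = 0.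
Proof.
move=> b1 b2 Be ee'; have [t [_ _ et tout]] := bcoord_expansion b1 e.
have sum0 : \sum_(y <- t) bcoord B1 e y * bcoord B2 y e' = 0.
  by rewrite -bcoord_sum // -et bcoord_basis // eq_sym (negbTE ee').
have [xt|/tout ->] := boolP (x \in t); last by rewrite mul0r.
exact: zero_sum_free_sum_eq0 zsfR sum0 x xt.
Qed.

Lemma basis_vector_unit_multiple B1 B2 b : is_basis B1 -> is_basis B2 -> B1 b ->
  exists e r r', [/\ B2 e, r * r' = 1 & b = r *: e].
Proof.
move=> b1 b2 Bb; have [s [us Bs eb _]] := bcoord_expansion b2 b.
pose p e := bcoord B2 b e; pose q e := bcoord B1 e b.
have sum1 : \sum_(e <- s) p e * q e = 1.
  by rewrite -bcoord_sum // -eb bcoord_basis // eqxx.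
have cross e e' : e \in s -> e != e' -> q e * p e' = 0.
  by move=> es; apply: bcoord_cross_eq0 => //; apply: Bs.
have [e es pq1] : exists2 e, e \in s & p e * q e = 1.
  apply: connected_idempotent_decomposition connR us sum1 _ => e e' es _ ee'.
  by rewrite -mulrA (mulrA (q e)) cross ?mul0r ?mulr0.
exists e, (p e), (q e); split => //; first exact: Bs.
rewrite {1}eb (bigD1_seq e) //= big1_seq ?addr0 // => e' /andP [e'e _].
have pe'0 : p e' = 0.
  by rewrite -[p e']mulr1 -pq1 mulrCA (mulrC (p e')) cross ?mulr0 // eq_sym.
by rewrite [bcoord _ _ _]pe'0 scale0r.
Qed.

Lemma line_unit_scale (e : V) (r r' : R) : r * r' = 1 ->
  same_set (line (r *: e)) (line e).
Proof.
move=> rr' w; split => [[a ->]|[a ->]]; first by exists (a * r); rewrite scalerA.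
by exists (a * r'); rewrite scalerA -mulrA (mulrC r') rr' mulr1.
Qed.

Lemma basis_line_transfer B1 B2 L : is_basis B1 -> is_basis B2 ->
  basis_line B1 L -> basis_line B2 L.
Proof.
move=> b1 b2 [b [Bb Lb]].
have [e [r [r' [Be rr' eb]]]] := basis_vector_unit_multiple b1 b2 Bb.
by exists e; split => // w; rewrite Lb eb (line_unit_scale _ rr').
Qed.

End BasisLines.

Section Automorphisms.
Variables (R : comNzSemiRingType) (V : lSemiModType R).
Implicit Types (B : V -> Prop) (f g : V -> V) (L : V -> Prop).

Lemma automorphism_sum f (s : seq V) (c : V -> R) : is_automorphism f ->
  f (\sum_(u <- s) c u *: u) = \sum_(u <- s) c u *: f u.
Proof.
move=> [fD fZ _]; elim: s => [|x s IH].
  by rewrite !big_nil -(scale0r (0 : V)) fZ !scale0r.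
by rewrite !big_cons fD fZ IH.
Qed.

Lemma automorphism_inverse f : is_automorphism f ->
  exists g, [/\ is_automorphism g, cancel f g & cancel g f].
Proof.
move=> [fD fZ [g fK gK]]; exists g; split => //; split.
- by move=> x y; apply: (can_inj fK); rewrite fD !gK.
- by move=> a x; apply: (can_inj fK); rewrite fZ !gK.
- exact: Bijective gK fK.
Qed.

Lemma automorphism_image_basis B f : is_basis B -> is_automorphism f ->
  is_basis (sigma f B).
Proof.
move=> [sp li] af; have [g [_ fK gK]] := automorphism_inverse af.
split.
  move=> v; have [s [c [Bs e]]] := sp (g v).
  exists (map f s), (c \o g); split.
    by move=> w /mapP [u us ->]; exists u; split => //; apply: Bs.
  by rewrite big_map -{1}(gK v) e automorphism_sum //; apply: eq_bigr => u _ /=; rewrite fK.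
move=> s c d us Bs e u su.
have sE : s = map f (map g s) by rewrite -map_comp map_id_in // => x _ /=; rewrite gK.
have ugs : uniq (map g s) by rewrite map_inj_uniq //; apply: (can_inj gK).
have Bgs u' : u' \in map g s -> B u'.
  by case/mapP => w /Bs [u'' [Bu'' ->]] ->; rewrite fK.
have egs : \sum_(u' <- map g s) c (f u') *: u' = \sum_(u' <- map g s) d (f u') *: u'.
  apply: (can_inj fK); rewrite !automorphism_sum // -!(big_map f xpredT (fun w => _ w *: w)).
  by rewrite -sE.
rewrite -(gK u); apply: (li _ (c \o f) (d \o f) ugs Bgs egs).
by apply/mapP; exists u.
Qed.

Lemma sigma_line f v : is_automorphism f -> same_set (sigma f (line v)) (line (f v)).
Proof.
move=> [_ fZ _] w; split; first by move=> [u [[r ->] ->]]; exists r; rewrite fZ.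
by move=> [r ->]; exists (r *: v); split; [exists r | rewrite fZ].
Qed.

Lemma sigma_same_set f L1 L2 : same_set L1 L2 -> same_set (sigma f L1) (sigma f L2).
Proof. by move=> L12 w; split => -[u [/L12 Lu ->]]; exists u. Qed.

Lemma sigma_comp f g L : same_set (sigma (f \o g) L) (sigma f (sigma g L)).
Proof.
move=> w; split; first by move=> [u [Lu ->]]; exists (g u); split => //; exists u.
by move=> [_ [[u [Lu ->]] ->]]; exists u.
Qed.

Lemma sigmaK f g L : cancel g f -> same_set (sigma f (sigma g L)) L.
Proof.
move=> gK w; split; first by move=> [_ [[u [Lu ->]] ->]]; rewrite gK.
by move=> Lw; exists (g w); split; [exists w | rewrite gK].
Qed.

Lemma sigma_inj f L1 L2 : injective f ->
  same_set (sigma f L1) (sigma f L2) -> same_set L1 L2.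
Proof.
move=> injf L12 x; split => Lx.
  by have [u [Lu /injf ->]] := (L12 (f x)).1 (ex_intro _ x (conj Lx erefl)).
by have [u [Lu /injf ->]] := (L12 (f x)).2 (ex_intro _ x (conj Lx erefl)).
Qed.

Lemma sigma_basis_line B f L : zero_sum_free R -> connected_semiring R ->
  is_basis B -> is_automorphism f -> basis_line B L -> basis_line B (sigma f L).
Proof.
move=> zsf conn bB af [v [Bv Lv]].
apply: (@basis_line_transfer _ _ zsf conn _ _ (sigma f L)
  (automorphism_image_basis bB af) bB).
exists (f v); split; first by exists v.
by move=> w; rewrite (sigma_same_set f Lv) (sigma_line _ af).
Qed.

End Automorphisms.

Theorem lemma3p8 (R : comNzSemiRingType) (V : lSemiModType R) :
  zero_sum_free R -> connected_semiring R -> free_module V ->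
  (* basis lines do not depend on the basis *)
  (forall B1 B2 : V -> Prop, is_basis B1 -> is_basis B2 ->
     forall L, basis_line B1 L <-> basis_line B2 L) /\
  (* an automorphism induces a permutation of the basis lines *)
  (forall (B : V -> Prop) (f : V -> V), is_basis B -> is_automorphism f ->
     (forall v, B v -> same_set (sigma f (line v)) (line (f v))) /\
     (forall L, basis_line B L -> basis_line B (sigma f L)) /\
     (forall L1 L2, basis_line B L1 -> basis_line B L2 ->
        same_set (sigma f L1) (sigma f L2) -> same_set L1 L2) /\
     (forall L', basis_line B L' ->
        exists L, basis_line B L /\ same_set (sigma f L) L')) /\
  (* sigma_{fg} = sigma_f sigma_g *)
  (forall f g : V -> V, is_automorphism f -> is_automorphism g ->
     forall L, same_set (sigma (f \o g) L) (sigma f (sigma g L))).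
Proof.
move=> zsf conn _; split.
  by move=> B1 B2 b1 b2 L; split; apply: basis_line_transfer.
split; last by move=> f g _ _ L; apply: sigma_comp.
move=> B f bB af; have [g [ag fK gK]] := automorphism_inverse af.
split; first by move=> v _; apply: sigma_line.
split; first by move=> L; apply: sigma_basis_line.
split; first by move=> L1 L2 _ _; apply: sigma_inj (can_inj fK).
move=> L' BL'; exists (sigma g L'); split; last exact: sigmaK.
exact: sigma_basis_line.
Qed.
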